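(* Let $d\ge1$, $T\ge1$, $\tau\in\{1,\dots,T\}$, learning rates $\eta_t>0$ and batch sizes $n_t\ge1$ with $n_\tau\ge2$. Let $\mu_g:\mathbb{R}^d\to\mathbb{R}^d$ and $\Sigma_g:\mathbb{R}^d\to\mathbb{R}^{d\times d}$ with $\Sigma_g(\theta)$ positive definite for all $\theta$, and let $\ell(\theta;x)$ be a differentiable loss and $z^*$ a fixed target data point. Consider two probability models for a parameter trajectory $(\theta_0,\theta_1,\dots,\theta_T)$ in $\mathbb{R}^d$, in both of which $\theta_0$ has the same distribution and the trajectory is a Markov chain: under $\mathbf{H_0}$, for every $t$, \[ \theta_t\mid\theta_{t-1}\sim\mathcal{N}\Big(\theta_{t-1}-\eta_t\mu_g(\theta_{t-1}),\ \tfrac{\eta_t^2\Sigma_g(\theta_{t-1})}{n_t}\Big); \] under $\mathbf{H_1^\tau}$ the same transition holds for $t\neq\tau$, while \[ \theta_\tau\mid\theta_{\tau-1}\sim\mathcal{N}\Big(\theta_{\tau-1}-\eta_\tau\frac{(n_\tau-1)\mu_g(\theta_{\tau-1})+\nabla_\theta\ell(\theta_{\tau-1};z^* )}{n_\tau},\ \frac{\eta_\tau^2(n_\tau-1)\Sigma_g(\theta_{\tau-1})}{n_\tau^2}\Big). \] Let $\mu_g=\mu_g(\theta_{\tau-1})$, $\Sigma_g=\Sigma_g(\theta_{\tau-1})$, $\delta_g=\nabla_\theta\ell(\theta_{\tau-1};z^* )-\mu_g$, $N=\theta_\tau-\theta_{\tau-1}+\eta_\tau\mu_g$ and $m^*=\delta_g^\top\Sigma_g^{-1}\delta_g$.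 Then the log of the ratio of the joint density of $(\theta_0,\dots,\theta_T)$ under $\mathbf{H_1^\tau}$ to that under $\mathbf{H_0}$ is \[ \log\mathrm{LR}=-\frac d2\log\Big(\frac{n_\tau-1}{n_\tau}\Big)-\frac{n_\tau}{2(n_\tau-1)\eta_\tau^2}N^\top\Sigma_g^{-1}N-\frac{n_\tau}{(n_\tau-1)\eta_\tau}N^\top\Sigma_g^{-1}\delta_g-\frac{m^*}{2(n_\tau-1)}. \]
   Context: This models (stochastic) gradient descent $\theta_t=\theta_{t-1}-\eta_tg_t$ where the batch gradient $g_t$ on $n_t$ points is assumed Gaussian with mean $\mu_g(\theta_{t-1})$ and covariance $\Sigma_g(\theta_{t-1})/n_t$ given $\theta_{t-1}$; under $\mathbf{H_1^\tau}$ one point of batch $\tau$ is replaced by the target $z^*$. *)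

From HB Require Import structures.
From mathcomp Require Import all_boot all_order all_algebra.
From mathcomp Require Import all_classical all_reals all_analysis.
Set Implicit Arguments. Unset Strict Implicit. Unset Printing Implicit Defensive.
Import Order.TTheory GRing.Theory Num.Theory.
Import numFieldNormedType.Exports.
Local Open Scope ring_scope.

Definition qform (R : realType) (d : nat) (x : 'rV[R]_d) (A : 'M[R]_d) : R :=
  (x *m A *m x^T) 0 0.

Definition bform (R : realType) (d : nat) (x : 'rV[R]_d) (A : 'M[R]_d) (y : 'rV[R]_d) : R :=
  (x *m A *m y^T) 0 0.

Definition posdef (R : realType) (d : nat) (S : 'M[R]_d) : Prop :=
  S^T = S /\ forall x : 'rV[R]_d, x != 0 -> 0 < qform x S.

Definition gauss_pdf (R : realType) (d : nat) (m : 'rV[R]_d) (S : 'M[R]_d) (x : 'rV[R]_d) : R :=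
  (Num.sqrt ((2 * pi) ^+ d * \det S))^-1 * expR (- (qform (x - m) (invmx S)) / 2).

Definition grad (R : realType) (d : nat) (f : 'rV[R]_d -> R) (th : 'rV[R]_d) : 'rV[R]_d :=
  \row_(i < d) ('D_(delta_mx 0 i) f th).

Definition kernel_H0 (R : realType) (d : nat) (eta : nat -> R) (n : nat -> nat)
  (mu_g : 'rV[R]_d -> 'rV[R]_d) (Sigma_g : 'rV[R]_d -> 'M[R]_d)
  (t : nat) (prev next : 'rV[R]_d) : R :=
  gauss_pdf (prev - eta t *: mu_g prev)
            (((eta t) ^+ 2 / (n t)%:R) *: Sigma_g prev) next.

Definition kernel_H1_tau (R : realType) (d : nat) (eta : nat -> R) (n : nat -> nat)
  (mu_g : 'rV[R]_d -> 'rV[R]_d) (Sigma_g : 'rV[R]_d -> 'M[R]_d)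
  (gradl : 'rV[R]_d -> 'rV[R]_d) (t : nat) (prev next : 'rV[R]_d) : R :=
  gauss_pdf (prev - eta t *: (((n t)%:R)^-1 *: (((n t).-1)%:R *: mu_g prev + gradl prev)))
            (((eta t) ^+ 2 * ((n t).-1)%:R / ((n t)%:R ^+ 2)) *: Sigma_g prev) next.

Definition joint_H0 (R : realType) (d : nat) (T : nat) (p0 : 'rV[R]_d -> R)
  (eta : nat -> R) (n : nat -> nat)
  (mu_g : 'rV[R]_d -> 'rV[R]_d) (Sigma_g : 'rV[R]_d -> 'M[R]_d)
  (theta : nat -> 'rV[R]_d) : R :=
  p0 (theta 0%N) *
  \prod_(1 <= t < T.+1) kernel_H0 eta n mu_g Sigma_g t (theta t.-1) (theta t).

Definition joint_H1 (R : realType) (d : nat) (T tau : nat) (p0 : 'rV[R]_d -> R)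
  (eta : nat -> R) (n : nat -> nat)
  (mu_g : 'rV[R]_d -> 'rV[R]_d) (Sigma_g : 'rV[R]_d -> 'M[R]_d)
  (gradl : 'rV[R]_d -> 'rV[R]_d)
  (theta : nat -> 'rV[R]_d) : R :=
  p0 (theta 0%N) *
  \prod_(1 <= t < T.+1)
     (if t == tau then kernel_H1_tau eta n mu_g Sigma_g gradl t (theta t.-1) (theta t)
      else kernel_H0 eta n mu_g Sigma_g t (theta t.-1) (theta t)).

From HB Require Import structures.
From mathcomp Require Import all_boot all_order all_algebra.
From mathcomp Require Import all_classical all_reals all_analysis.
From mathcomp Require Import ring.
Set Implicit Arguments. Unset Strict Implicit. Unset Printing Implicit Defensive.
Import Order.TTheory GRing.Theory Num.Theory.
Import numFieldNormedType.Exports.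
Local Open Scope ring_scope.

(* Both hypotheses give Markov chains with the same initial law and the same
   kernels except at step tau, so the likelihood ratio collapses to the ratio
   of the two Gaussian transition densities at step tau.  Their covariances
   are proportional, with ratio (n-1)/n, which produces the log-determinant
   term; the residual under H1 is N + (eta/n) delta, and expanding its
   quadratic form yields the remaining three terms. *)

Section QuadraticForms.
Variables (R : realType) (d : nat).
Implicit Types (u v x : 'rV[R]_d) (A B S : 'M[R]_d).

Lemma qformD x A B : qform x (A + B) = qform x A + qform x B.
Proof. by rewrite /qform mulmxDr mulmxDl mxE. Qed.

Lemma qformZ x c A : qform x (c *: A) = c * qform x A.
Proof. by rewrite /qform -scalemxAr -scalemxAl mxE. Qed.

Lemma qform1_gt0 v : v != 0 -> 0 < qform v 1%:M.
Proof.
move=> vN0; rewrite /qform mulmx1 mxE.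
have [j vj] : exists j, v 0 j != 0.
  apply/existsP; apply: contraR vN0 => /existsPn v0.
  by apply/eqP/rowP => j; rewrite mxE; apply/eqP; rewrite -[_ == _]negbK v0.
rewrite (bigD1 j) //= ltr_pwDl //.
  by rewrite mxE -expr2 lt_def sqr_ge0 andbT sqrf_eq0.
by apply: sumr_ge0 => i _; rewrite mxE -expr2 sqr_ge0.
Qed.

Lemma bform_sym u v A : A^T = A -> bform u A v = bform v A u.
Proof.
move=> sA; have tr00 (M : 'M[R]_1) : M 0 0 = M^T 0 0 by rewrite mxE.
by rewrite /bform [LHS]tr00 !trmx_mul trmxK sA mulmxA.
Qed.

Lemma qformDZ u v a A : A^T = A ->
  qform (u + a *: v) A = qform u A + 2 * a * bform u A v + a ^+ 2 * qform v A.
Proof.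
move=> sA; have := bform_sym u v sA; rewrite /qform /bform => uv.
have add00 (M N : 'M[R]_1) : (M + N) 0 0 = M 0 0 + N 0 0 by rewrite mxE.
have scale00 c (M : 'M[R]_1) : (c *: M) 0 0 = c * M 0 0 by rewrite mxE.
rewrite linearD linearZ /= !(mulmxDl, mulmxDr) -!scalemxAr -!scalemxAl.
by rewrite !add00 !scale00 -uv; ring.
Qed.
End QuadraticForms.

Section PositiveDefinite.
Variables (R : realType) (d : nat).
Implicit Types (S : 'M[R]_d).

Lemma posdefZ c S : 0 < c -> posdef S -> posdef (c *: S).
Proof.
move=> c0 [sS PS]; split; first by rewrite linearZ /= sS.
by move=> v vN0; rewrite qformZ mulr_gt0 ?PS.
Qed.

Lemma posdef_convex1 t S : 0 <= t <= 1 -> posdef S ->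
  posdef (t *: S + (1 - t) *: 1%:M).
Proof.
move=> /andP[t0 t1] [sS PS]; split; first by rewrite linearD !linearZ /= sS trmx1.
move=> v vN0; rewrite qformD !qformZ.
move: t1; rewrite le_eqVlt => /predU1P[->|t_lt1].
  by rewrite subrr mul0r addr0 mul1r PS.
apply: ltr_wpDl; first by rewrite mulr_ge0 // ltW ?PS.
by rewrite mulr_gt0 ?subr_gt0 ?qform1_gt0.
Qed.

Lemma posdef_unitmx S : posdef S -> S \in unitmx.
Proof.
move=> [_ PS]; rewrite unitmxE unitfE; apply/det0P => -[v vN0 vS].
by have := PS v vN0; rewrite /qform vS mul0mx mxE ltxx.
Qed.

(* The determinant along the segment from 1%:M to S never vanishes, so by the
   intermediate value theorem it keeps the sign of \det 1%:M = 1. *)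
Lemma posdef_det_gt0 S : posdef S -> 0 < \det S.
Proof.
move=> PS.
pose P : 'M[{poly R}]_d :=
  \matrix_(i, j) ((S i j)%:P * 'X + ((i == j)%:R)%:P * (1 - 'X)).
have P_eval t : (\det P).[t] = \det (t *: S + (1 - t) *: 1%:M).
  rewrite -horner_evalE -det_map_mx; congr (\det _); apply/matrixP => i j.
  by rewrite !mxE /= horner_evalE !hornerE mulrC [_ * (1 - t)]mulrC.
have P_neq0 t : 0 <= t <= 1 -> (\det P).[t] != 0.
  move=> t01; rewrite P_eval -unitfE -unitmxE.
  exact/posdef_unitmx/posdef_convex1.
have P0 : (\det P).[0] = 1 by rewrite P_eval scale0r add0r subr0 scale1r det1.
have P1 : (\det P).[1] = \det S by rewrite P_eval subrr scale0r addr0 scale1r.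
rewrite lt_def -P1 P_neq0 ?ler01 ?lexx //= P1 leNgt; apply/negP => S_lt0.
have P01 : (- \det P).[0] <= 0 <= (- \det P).[1].
  by rewrite !hornerN P0 P1 oppr_le0 ler01 oppr_ge0 ltW.
have [x /andP[x0 x1]] := poly_ivt ler01 P01.
by rewrite /root hornerN oppr_eq0 (negbTE (P_neq0 x _)) // x0 x1.
Qed.
End PositiveDefinite.

Section Gaussian.
Variables (R : realType) (d : nat).
Implicit Types (m x : 'rV[R]_d) (S : 'M[R]_d).

Lemma gauss_norm_gt0 S : posdef S -> 0 < (2 * pi) ^+ d * \det S.
Proof. by move=> PS; rewrite mulr_gt0 ?posdef_det_gt0 ?exprn_gt0 ?mulr_gt0 ?pi_gt0. Qed.

Lemma gauss_pdf_gt0 m S x : posdef S -> 0 < gauss_pdf m S x.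
Proof.
by move=> PS; rewrite mulr_gt0 ?expR_gt0 ?invr_gt0 ?sqrtr_gt0 ?gauss_norm_gt0.
Qed.

Lemma ln_gauss_pdf m S x : posdef S ->
  ln (gauss_pdf m S x) =
  - ln ((2 * pi) ^+ d * \det S) / 2 - qform (x - m) (invmx S) / 2.
Proof.
move=> /gauss_norm_gt0; set a := (2 * pi) ^+ d * \det S => a_gt0.
have ln_sqrt : ln (Num.sqrt a) = ln a / 2.
  by rewrite -{2}(sqr_sqrtr (ltW a_gt0)) lnXn ?sqrtr_gt0 //; field.
rewrite /gauss_pdf -/a lnM ?posrE ?invr_gt0 ?sqrtr_gt0 ?expR_gt0 //.
by rewrite lnV ?posrE ?sqrtr_gt0 // expRK ln_sqrt; field.
Qed.

Lemma ln_gauss_pdf_ratio m1 m0 c1 c0 S x : 0 < c1 -> 0 < c0 -> posdef S ->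
  ln (gauss_pdf m1 (c1 *: S) x / gauss_pdf m0 (c0 *: S) x) =
  - (d%:R / 2) * ln (c1 / c0)
  - qform (x - m1) (invmx S) / (2 * c1) + qform (x - m0) (invmx S) / (2 * c0).
Proof.
move=> c1_gt0 c0_gt0 PS; have S_det_gt0 := posdef_det_gt0 PS.
have pi_d_gt0 : 0 < (2 * pi) ^+ d :> R by rewrite exprn_gt0 ?mulr_gt0 ?pi_gt0.
have [PS1 PS0] := (posdefZ c1_gt0 PS, posdefZ c0_gt0 PS).
rewrite ln_div ?posrE ?gauss_pdf_gt0 // !ln_gauss_pdf //.
rewrite !detZ !invmxZ ?posdef_unitmx // !qformZ.
rewrite [ln (c1 / c0)]ln_div ?posrE //.
rewrite !lnM ?posrE ?pi_d_gt0 ?mulr_gt0 ?exprn_gt0 //.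
rewrite [ln (c1 ^+ d)]lnXn // [ln (c0 ^+ d)]lnXn //.
rewrite -[ln c1 *+ d]mulr_natl -[ln c0 *+ d]mulr_natl.
by field; rewrite !gt_eqF.
Qed.
End Gaussian.

Lemma prod_replace_ratio (F : fieldType) (I : eqType) (s : seq I) (i : I)
    (a : F) (f g : I -> F) :
  uniq s -> i \in s -> a != 0 -> (forall j, j \in s -> g j != 0) ->
  a * \prod_(j <- s) (if j == i then f j else g j) / (a * \prod_(j <- s) g j)
  = f i / g i.
Proof.
move=> s_uniq i_s a_neq0 g_neq0.
rewrite !(bigD1_seq i) //= eqxx.
under eq_bigr => j /negbTE ji do rewrite ji.
have rest_neq0 : \prod_(j <- s | j != i) g j != 0.
  by rewrite prodf_seq_neq0; apply/allP => j /g_neq0 ->; rewrite implybT.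
by field; rewrite a_neq0 rest_neq0 g_neq0.
Qed.

Section SGDKernels.
Variables (R : realType) (d : nat) (eta : nat -> R) (n : nat -> nat).
Variables (mu_g : 'rV[R]_d -> 'rV[R]_d) (Sigma_g : 'rV[R]_d -> 'M[R]_d).

Lemma kernel_H0_gt0 t prev next : 0 < eta t -> (0 < n t)%N ->
  posdef (Sigma_g prev) -> 0 < kernel_H0 eta n mu_g Sigma_g t prev next.
Proof.
move=> eta_gt0 n_gt0 PS; apply/gauss_pdf_gt0/posdefZ => //.
by rewrite divr_gt0 ?exprn_gt0 ?ltr0n.
Qed.

Lemma joint_ratio T tau p0 gradl (theta : nat -> 'rV[R]_d) :
  (1 <= tau <= T)%N ->
  (forall t, (1 <= t <= T)%N -> 0 < eta t) ->
  (forall t, (1 <= t <= T)%N -> (1 <= n t)%N) ->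
  (forall th, posdef (Sigma_g th)) -> p0 (theta 0%N) != 0 ->
  joint_H1 T tau p0 eta n mu_g Sigma_g gradl theta /
    joint_H0 T p0 eta n mu_g Sigma_g theta
  = kernel_H1_tau eta n mu_g Sigma_g gradl tau (theta tau.-1) (theta tau) /
    kernel_H0 eta n mu_g Sigma_g tau (theta tau.-1) (theta tau).
Proof.
move=> tau_range eta_gt0 n_gt0 PS p0_neq0.
rewrite /joint_H1 /joint_H0 prod_replace_ratio ?iota_uniq ?mem_index_iota ?ltnS //.
move=> t; rewrite mem_index_iota ltnS => t_range.
by rewrite gt_eqF ?kernel_H0_gt0 ?eta_gt0 ?n_gt0.
Qed.

Lemma ln_kernel_ratio gradl t prev next :
  0 < eta t -> (2 <= n t)%N -> posdef (Sigma_g prev) ->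
  let mu := mu_g prev in
  let Sig := Sigma_g prev in
  let delta := gradl prev - mu in
  let N := next - prev + eta t *: mu in
  let nt := (n t)%:R : R in
  let et := eta t in
  ln (kernel_H1_tau eta n mu_g Sigma_g gradl t prev next /
      kernel_H0 eta n mu_g Sigma_g t prev next)
  = - (d%:R / 2) * ln ((nt - 1) / nt)
    - nt / (2 * (nt - 1) * et ^+ 2) * qform N (invmx Sig)
    - nt / ((nt - 1) * et) * bform N (invmx Sig) delta
    - qform delta (invmx Sig) / (2 * (nt - 1)).
Proof.
move=> et_gt0 n_ge2 PS mu Sig delta N nt et.
have nt_gt1 : 1 < nt by rewrite ltr1n.
have nt_gt0 : 0 < nt := lt_trans ltr01 nt_gt1.
have pred_nt : (n t).-1%:R = nt - 1 :> R by rewrite -subn1 natrB // ltnW.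
have c1_gt0 : 0 < et ^+ 2 * (n t).-1%:R / nt ^+ 2.
  by rewrite pred_nt divr_gt0 ?mulr_gt0 ?exprn_gt0 ?subr_gt0.
have c0_gt0 : 0 < et ^+ 2 / nt by rewrite divr_gt0 ?exprn_gt0.
rewrite /kernel_H1_tau /kernel_H0 -/mu -/Sig -/et -/nt ln_gauss_pdf_ratio //.
have -> : et ^+ 2 * (n t).-1%:R / nt ^+ 2 / (et ^+ 2 / nt) = (nt - 1) / nt.
  by rewrite pred_nt; field; rewrite !gt_eqF.
have -> : next - (prev - et *: mu) = N by rewrite /N opprD opprK addrA.
have -> : next - (prev - et *: (nt^-1 *: ((n t).-1%:R *: mu + gradl prev)))
          = N + (et / nt) *: delta.
  rewrite /N /delta -/et; apply/rowP => j; rewrite !mxE pred_nt.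
  by field; rewrite gt_eqF.
have Sig_inv_sym : (invmx Sig)^T = invmx Sig by rewrite trmx_inv (proj1 PS).
rewrite qformDZ // pred_nt.
by field; rewrite subr_eq0 !gt_eqF.
Qed.
End SGDKernels.

Theorem theorem4p1 (R : realType) (d T tau : nat) (X : Type)
  (eta : nat -> R) (n : nat -> nat)
  (mu_g : 'rV[R]_d -> 'rV[R]_d) (Sigma_g : 'rV[R]_d -> 'M[R]_d)
  (loss : 'rV[R]_d -> X -> R) (zstar : X)
  (p0 : 'rV[R]_d -> R) (theta : nat -> 'rV[R]_d) :
  (1 <= d)%N -> (1 <= T)%N -> (1 <= tau <= T)%N ->
  (forall t, (1 <= t <= T)%N -> 0 < eta t) ->
  (forall t, (1 <= t <= T)%N -> (1 <= n t)%N) ->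
  (2 <= n tau)%N ->
  (forall th, posdef (Sigma_g th)) ->
  (forall th, differentiable (fun th' => loss th' zstar) th) ->
  (forall th, 0 <= p0 th) ->
  0 < p0 (theta 0%N) ->
  let gradl := grad (fun th' => loss th' zstar) in
  let mu := mu_g (theta tau.-1) in
  let Sig := Sigma_g (theta tau.-1) in
  let delta := gradl (theta tau.-1) - mu in
  let N := theta tau - theta tau.-1 + eta tau *: mu in
  let mstar := qform delta (invmx Sig) in
  let nt := (n tau)%:R : R in
  let et := eta tau in
  ln (joint_H1 T tau p0 eta n mu_g Sigma_g gradl theta /
      joint_H0 T p0 eta n mu_g Sigma_g theta)
  = - (d%:R / 2) * ln ((nt - 1) / nt)
    - nt / (2 * (nt - 1) * et ^+ 2) * qform N (invmx Sig)
    - nt / ((nt - 1) * et) * bform N (invmx Sig) delta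
    - mstar / (2 * (nt - 1)).
Proof.
move=> _ _ tau_range eta_gt0 n_gt0 n_tau_ge2 PS _ _ p0_gt0 gradl.
rewrite joint_ratio ?gt_eqF //.
exact (@ln_kernel_ratio R d eta n mu_g Sigma_g gradl tau (theta tau.-1) (theta tau)
          (eta_gt0 _ tau_range) n_tau_ge2 (PS _)).
Qed.
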